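(* Let $(X,\mu)$ be a measure space, $\mathcal H=L^2(X,\mu)$ the real Hilbert space with inner product $\langle\cdot,\cdot\rangle$, and $\hat H\colon \operatorname{dom}(\hat H)\subset\mathcal H\to\mathcal H$ a densely defined self-adjoint linear operator. Let $\theta\mapsto\psi_\theta\in\operatorname{dom}(\hat H)\setminus\{0\}$, $\theta\in\mathbb R^P$, be a sufficiently regular family of real-valued wavefunctions with $\psi_\theta(x)\neq 0$ for $\mu$-a.e. $x$ (regular enough that all expressions below are well defined, $\partial_{\theta_j}\psi_\theta\in\operatorname{dom}(\hat H)$ with $\hat H\partial_{\theta_j}\psi_\theta=\partial_{\theta_j}(\hat H\psi_\theta)$, and differentiation under the integral sign is permitted). Set $\hat\psi_\theta=\psi_\theta/\|\psi_\theta\|$ and define \[ H(\theta)_{ij}=\langle \partial_{\theta_i}\hat\psi_\theta,\hat H\,\partial_{\theta_j}\hat\psi_\theta\rangle,\qquad i,j=1,\dots,P. \] Let $p_\theta=\psi_\theta^2/\|\psi_\theta\|^2$ be the Born density and write $\langle f\rangle=\int_X f\,p_\theta\,d\mu$. Let $E_L=\hat H\psi_\theta/\psi_\theta$ be the local energy and $E_{L,j}=\partial_{\theta_j}E_L$. Then for all $i,j$, \[ H(\theta)_{ij}=\Big\langle \Big[E_{L,j}+E_L\big(\partial_{\theta_j}\log|\psi_\theta|-\langle\partial_{\theta_j}\log|\psi_\theta|\rangle\big)\Big]\cdot\Big[\partial_{\theta_i}\log|\psi_\theta|-\langle\partial_{\theta_i}\log|\psi_\theta|\rangle\Big]\Big\rangle.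 \]
   Context: All wavefunctions are real. $\|\cdot\|$ is the norm induced by $\langle\cdot,\cdot\rangle$. *)

From HB Require Import structures.
From mathcomp Require Import all_boot all_order all_algebra.
From mathcomp Require Import all_classical all_reals all_analysis.
Set Implicit Arguments. Unset Strict Implicit. Unset Printing Implicit Defensive.
Import Order.TTheory GRing.Theory Num.Theory.
Import numFieldNormedType.Exports.
Local Open Scope classical_set_scope.
Local Open Scope ring_scope.

Section Defs.
Context {d : measure_display} {X : measurableType d} {R : realType}.
Variable mu : {measure set X -> \bar R}.

Definition L2 (f : X -> R) : Prop :=
  measurable_fun setT f /\ mu.-integrable setT (fun x => (f x ^+ 2)%:E).

Definition ip (f g : X -> R) : R := Rintegral mu setT (fun x => f x * g x).
Definition nrm (f : X -> R) : R := Num.sqrt (ip f f).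

(* a linear operator on L^2 with domain dom, acting on representatives and
   well defined on a.e.-classes *)
Definition linear_operator (dom : set (X -> R)) (Hop : (X -> R) -> (X -> R)) : Prop :=
  dom `<=` L2 /\
      (forall f, dom f -> L2 (Hop f)) /\
      (forall f g, dom f -> L2 g -> {ae mu, forall x, f x = g x} ->
          dom g /\ {ae mu, forall x, Hop f x = Hop g x}) /\
      dom (fun _ => 0) /\
      (forall (a : R) f g, dom f -> dom g -> dom (fun x => a * f x + g x)) /\
      (forall (a : R) f g, dom f -> dom g ->
          {ae mu, forall x, Hop (fun y => a * f y + g y) x = a * Hop f x + Hop g x}).

Definition densely_defined (dom : set (X -> R)) : Prop :=
  forall g, L2 g -> forall e : R, 0 < e ->
    exists f, dom f /\ nrm (fun x => f x - g x) < e.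

(* H = H^* : H symmetric and dom(H^* ) included in dom(H) *)
Definition self_adjoint (dom : set (X -> R)) (Hop : (X -> R) -> (X -> R)) : Prop :=
  (forall f g, dom f -> dom g -> ip (Hop f) g = ip f (Hop g)) /\
  (forall g h, L2 g -> L2 h -> (forall f, dom f -> ip (Hop f) g = ip f h) -> dom g).

Definition born_mean (psi : X -> R) (f : X -> R) : R :=
  Rintegral mu setT (fun x => f x * (psi x ^+ 2 / nrm psi ^+ 2)).

End Defs.

Definition pd {R : realType} {P : nat} (j : 'I_P) (F : 'rV[R]_P -> R)
  (th : 'rV[R]_P) : R := 'D_(delta_mx 0 j) F th.

Definition local_energy {X : Type} {R : realType} {P : nat}
  (Hop : (X -> R) -> (X -> R)) (psi : 'rV[R]_P -> X -> R) (th : 'rV[R]_P) (x : X) : R :=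
  Hop (psi th) x / psi th x.

(* Write [phi_j = d_j psi], [c_j = <psi, phi_j>] and [n = ||psi||].  Then
   [d_j n = c_j / n], so [d_j (psi / n) = (phi_j - (c_j / n^2) psi) / n], and by
   linearity [H d_j (psi / n) = (H phi_j - (c_j / n^2) H psi) / n].  On the Born side,
   wherever [psi <> 0] we have [d_j log|psi| = phi_j / psi], whose Born mean is
   [c_j / n^2], and [d_j E_L = H phi_j / psi - H psi phi_j / psi^2]; hence
   [E_{L,j} + E_L (d_j log|psi| - <d_j log|psi|>) = (H phi_j - (c_j / n^2) H psi) / psi]
   and [d_i log|psi| - <d_i log|psi|> = (phi_i - (c_i / n^2) psi) / psi].  Both sides
   of the identity are thus the integral of
   [(H phi_j - (c_j / n^2) H psi) (phi_i - (c_i / n^2) psi) / n^2]. *)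

From HB Require Import structures.
From mathcomp Require Import all_boot all_order all_algebra.
From mathcomp Require Import all_classical all_reals all_analysis.
From mathcomp Require Import measurable_realfun ring lra.
Set Implicit Arguments. Unset Strict Implicit. Unset Printing Implicit Defensive.
Import Order.TTheory GRing.Theory Num.Theory.
Import numFieldNormedType.Exports.
Local Open Scope classical_set_scope.
Local Open Scope ring_scope.

Section DirectionalDerivatives.
Variables (R : realType) (V : normedModType R).

Lemma is_derive_line (F : V -> R) (a v : V) (dF : R) :
  is_derive a v F dF <-> is_derive (0 : R) (1 : R) (fun h : R => F (h *: v + a)) dF.
Proof.
have DE : 'D_v F a = 'D_1 (fun h : R => F (h *: v + a)) 0.
  rewrite /derive; do 2 f_equal; apply: funext => h /=.
  by rewrite !scale0r !add0r [h%:A]mulr1 addr0.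
split=> -[derF <-].
- by rewrite DE; apply: DeriveDef => //; move/derivable1P: derF.
- by rewrite -DE; apply: DeriveDef => //; apply/derivable1P.
Qed.

Lemma is_derive_comp (F : V -> R) (g : R -> R) (a v : V) (dF dg : R) :
  is_derive a v F dF -> is_derive (F a) 1 g dg ->
  is_derive a v (g \o F) (dg * dF).
Proof.
move=> /is_derive_line DF Dg; apply/is_derive_line.
have Dg0 : is_derive ((fun h : R => F (h *: v + a)) 0) 1 g dg.
  by rewrite scale0r add0r.
exact: (is_derive1_comp Dg0 DF).
Qed.

Lemma is_derive_div (f g : V -> R) (a v : V) (df dg : R) :
  is_derive a v f df -> is_derive a v g dg -> g a != 0 ->
  is_derive a v (fun t => f t / g t) (df / g a - f a * dg / g a ^+ 2).
Proof.
move=> Df Dg ga0.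
have DgV : is_derive a v (fun t => (g t)^-1) (- (g a) ^- 2 *: dg).
  by apply: DeriveDef; [apply: derivableV; case: Dg|rewrite deriveV //; case: Dg => _ ->].
have -> : (fun t => f t / g t) = f * (fun t => (g t)^-1) by [].
apply: is_derive_eq (is_deriveM Df DgV) _.
by rewrite /GRing.scale /=; field.
Qed.

End DirectionalDerivatives.

Lemma is_derive1_ln_norm (R : realType) (y : R) : y != 0 ->
  is_derive y 1 (fun z : R => ln `|z|) y^-1.
Proof.
move=> y0; have [yp|yn] := ltP 0 y.
  have E : \near y, ln y = ln `|y|.
    near=> z; rewrite gtr0_norm //; near: z; exact: (cvgr_gt y).
  exact: near_eq_is_derive E (is_derive1_ln yp).
have yn' : y < 0 by rewrite lt_neqAle y0 yn.
have E : \near y, (@ln R \o -%R) y = ln `|y|.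
  near=> z; rewrite /= ltr0_norm //; near: z; exact: (cvgr_lt y).
have D : is_derive y 1 (@ln R \o -%R) ((- y)^-1 * (- 1)).
  by apply: is_derive1_comp; apply: is_derive1_ln; rewrite oppr_gt0.
have [dD DE] := near_eq_is_derive E D.
by apply: DeriveDef => //; rewrite DE invrN mulrN mulNr mulr1 opprK.
Unshelve. all: by end_near.
Qed.

Lemma measurable_inv (R : realType) : measurable_fun setT (@GRing.inv R).
Proof.
have -> : [set: R] = [set x | x != 0] `|` [set 0].
  by apply/seteqP; split => x //= _; case: (eqVneq x 0) => [->|]; [right|left].
apply/measurable_funU => //.
  by apply: measurable_realfun.open_measurable; exact: open_neq.
split; last exact: measurable_fun_set1.
apply: measurable_realfun.open_continuous_measurable_fun; first exact: open_neq.
by move=> x; rewrite inE /= => x0; exact: inv_continuous.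
Qed.

Lemma measurable_funV d (X : measurableType d) (R : realType) (f : X -> R) :
  measurable_fun setT f -> measurable_fun setT (fun x => (f x)^-1).
Proof. by move=> mf; apply: measurableT_comp mf; exact: measurable_inv. Qed.

Section L2.
Context d (X : measurableType d) (R : realType) (mu : {measure set X -> \bar R}).

Lemma ae_eq_Rintegral (f g : X -> R) :
  measurable_fun setT f -> measurable_fun setT g ->
  {ae mu, forall x, f x = g x} -> Rintegral mu setT f = Rintegral mu setT g.
Proof.
move=> mf mg fg; congr fine; apply: ae_eq_integral => //.
- exact/measurable_EFinP.
- exact/measurable_EFinP.
- by apply: filterS fg => x /= ->.
Qed.

Lemma L2_integrableM (f g : X -> R) : L2 mu f -> L2 mu g ->
  mu.-integrable setT (EFin \o (fun x => f x * g x)).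
Proof.
move=> [mf if2] [mg ig2].
apply: (le_integrable measurableT _ _ (integrableD measurableT if2 ig2)).
  exact/measurable_EFinP/measurable_funM.
move=> x _; rewrite lee_fin [X in _ <= X]ger0_norm ?addr_ge0 ?sqr_ge0 //.
by case: (ler0P (f x * g x)) => h; nra.
Qed.

Lemma nrmE (f : X -> R) : nrm mu f = Num.sqrt (Rintegral mu setT (fun x => f x ^+ 2)).
Proof. by congr Num.sqrt; apply: eq_Rintegral => x _; rewrite expr2. Qed.

Lemma nrm_gt0 (f : X -> R) : nrm mu f != 0 -> 0 < nrm mu f.
Proof. by rewrite lt_neqAle eq_sym => ->; rewrite sqrtr_ge0. Qed.

End L2.

Section LinearOperator.
Context d (X : measurableType d) (R : realType) (mu : {measure set X -> \bar R}).
Variables (dom : set (X -> R)) (Hop : (X -> R) -> (X -> R)).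
Hypothesis Hlin : linear_operator mu dom Hop.

Lemma linear_operator_L2 f : dom f -> L2 mu f.
Proof. by case: Hlin => + _; apply. Qed.

Lemma linear_operator_measurable f : dom f -> measurable_fun setT (Hop f).
Proof. by move=> df; case: Hlin => _ [HopL2 _]; case: (HopL2 f df). Qed.

Lemma linear_operator0 : {ae mu, forall x, Hop (fun _ => 0) x = 0}.
Proof.
case: Hlin => _ [_ [_ [dom0 [_ HopD]]]].
have := HopD (-1) _ _ dom0 dom0.
have -> : (fun y : X => -1 * 0 + 0) = (fun _ => 0 : R).
  by apply/funext => y; rewrite mulr0 addr0.
by apply: filterS => x; lra.
Qed.

Lemma linear_operator_comb (a b : R) f g : dom f -> dom g ->
  dom (fun x => a * f x + b * g x) /\
  {ae mu, forall x, Hop (fun x => a * f x + b * g x) x = a * Hop f x + b * Hop g x}.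
Proof.
case: Hlin => _ [_ [_ [dom0 [domD HopD]]]] df dg.
have dbg : dom (fun x => b * g x + 0) by exact: domD.
have -> : (fun x => a * f x + b * g x) = (fun x => a * f x + (b * g x + 0)).
  by apply/funext => y; rewrite addr0.
split; first exact: domD.
apply: filterS3 (HopD a _ _ df dbg) (HopD b _ _ dg dom0) linear_operator0.
by move=> x -> -> ->; rewrite addr0.
Qed.

End LinearOperator.

Section WavefunctionFamily.
Context {d : measure_display} {X : measurableType d} {R : realType}.
Context {mu : {measure set X -> \bar R}} {P : nat}.
Context {dom : set (X -> R)} {Hop : (X -> R) -> (X -> R)}.
Context {psi : 'rV[R]_P -> X -> R} {th : 'rV[R]_P}.
Local Unset Implicit Arguments.

Local Notation e j := (delta_mx 0 j : 'rV[R]_P).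
Local Notation dpsi j := (fun x => pd j (fun t => psi t x) th).
Local Notation npsi := (nrm mu (psi th)).
Local Notation cpsi j := (ip mu (psi th) (dpsi j)).

Hypothesis Hlin : linear_operator mu dom Hop.
Hypothesis dom_psi : dom (psi th).
Hypothesis nrm_psi_neq0 : npsi != 0.
Hypothesis psi_derivable : forall j x, derivable (fun t => psi t x) th (e j).
Hypothesis dom_dpsi : forall j, dom (dpsi j).
Hypothesis pd_sqnorm : forall j,
  derivable (fun t => Rintegral mu setT (fun x => psi t x ^+ 2)) th (e j) /\
  pd j (fun t => Rintegral mu setT (fun x => psi t x ^+ 2)) th
    = Rintegral mu setT (fun x => pd j (fun t => psi t x ^+ 2) th).

Let measurable_psi : measurable_fun setT (psi th).
Proof. by case: (linear_operator_L2 Hlin dom_psi). Qed.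

Let measurable_dpsi j : measurable_fun setT (dpsi j).
Proof. by case: (linear_operator_L2 Hlin (dom_dpsi j)). Qed.

Lemma is_derive_sqnorm j :
  is_derive th (e j) (fun t => Rintegral mu setT (fun x => psi t x ^+ 2)) (2 * cpsi j).
Proof.
have [dN pdN] := pd_sqnorm j; apply: DeriveDef => //.
rewrite /pd in pdN; rewrite pdN -RintegralZl //; last first.
  exact: L2_integrableM (linear_operator_L2 Hlin dom_psi) (linear_operator_L2 Hlin (dom_dpsi j)).
apply: eq_Rintegral => x _.
have -> : (fun t => psi t x ^+ 2) = (fun t => psi t x) ^+ 2 by apply/funext.
by rewrite deriveX // mulrA.
Qed.

Lemma is_derive_nrm j : is_derive th (e j) (fun t => nrm mu (psi t)) (cpsi j / npsi).
Proof.
have N0 : 0 < Rintegral mu setT (fun x => psi th x ^+ 2).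
  by rewrite -sqrtr_gt0 -nrmE nrm_gt0.
have -> : (fun t => nrm mu (psi t))
          = Num.sqrt \o (fun t => Rintegral mu setT (fun x => psi t x ^+ 2)).
  by apply/funext => t; rewrite /= nrmE.
apply: is_derive_eq (is_derive_comp (is_derive_sqnorm j) (is_derive1_sqrt N0)) _.
by rewrite -nrmE; field.
Qed.

Lemma pd_normalized j x :
  pd j (fun t => psi t x / nrm mu (psi t)) th
  = (dpsi j x - cpsi j / npsi ^+ 2 * psi th x) / npsi.
Proof.
have Dpsi := derivableP (psi_derivable j x).
rewrite /pd; have [_ ->] := is_derive_div Dpsi (is_derive_nrm j) nrm_psi_neq0.
by field.
Qed.

Lemma Hop_pd_normalized j :
  dom (fun x => pd j (fun t => psi t x / nrm mu (psi t)) th) /\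
  {ae mu, forall x, Hop (fun x => pd j (fun t => psi t x / nrm mu (psi t)) th) x
     = (Hop (dpsi j) x - cpsi j / npsi ^+ 2 * Hop (psi th) x) / npsi}.
Proof.
have -> : (fun x => pd j (fun t => psi t x / nrm mu (psi t)) th)
          = (fun x => npsi^-1 * dpsi j x + (- (cpsi j / npsi ^+ 3)) * psi th x).
  by apply/funext => x; rewrite pd_normalized; field.
have [dom_comb Hop_comb] :=
  linear_operator_comb Hlin (npsi^-1) (- (cpsi j / npsi ^+ 3)) (dom_dpsi j) dom_psi.
split=> //; apply: filterS Hop_comb => x ->.
by field.
Qed.

Local Notation covariance_integrand i j := (fun x =>
  (Hop (dpsi j) x - cpsi j / npsi ^+ 2 * Hop (psi th) x)
  * (dpsi i x - cpsi i / npsi ^+ 2 * psi th x) / npsi ^+ 2).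

Let measurable_covariance_integrand i j : measurable_fun setT (covariance_integrand i j).
Proof.
have mHpsi := linear_operator_measurable Hlin dom_psi.
have mHdpsi := linear_operator_measurable Hlin (dom_dpsi j).
apply: measurable_funM _ (measurable_cst _).
apply: measurable_funM.
- exact: measurable_funB mHdpsi (measurable_funM (measurable_cst _) mHpsi).
- exact: measurable_funB (measurable_dpsi i) (measurable_funM (measurable_cst _) measurable_psi).
Qed.

Lemma ip_pd_normalized i j :
  ip mu (fun x => pd i (fun t => psi t x / nrm mu (psi t)) th)
        (Hop (fun x => pd j (fun t => psi t x / nrm mu (psi t)) th))
  = Rintegral mu setT (covariance_integrand i j).
Proof.
have [dom_dj HopE] := Hop_pd_normalized j.
have [dom_di _] := Hop_pd_normalized i.
apply: ae_eq_Rintegral => //.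
- have [mdi _] := linear_operator_L2 Hlin dom_di.
  exact: measurable_funM mdi (linear_operator_measurable Hlin dom_dj).
- apply: filterS HopE => x ->.
  by rewrite pd_normalized mulrC mulf_div expr2.
Qed.

Lemma pd_ln_norm j x : psi th x != 0 ->
  pd j (fun t => ln `|psi t x|) th = (psi th x)^-1 * dpsi j x.
Proof.
move=> px; have Dpsi := derivableP (psi_derivable j x).
by rewrite /pd; have [_ ->] := is_derive_comp Dpsi (is_derive1_ln_norm px).
Qed.

Lemma centered_score j x : psi th x != 0 ->
  pd j (fun t => ln `|psi t x|) th - cpsi j / npsi ^+ 2
  = (dpsi j x - cpsi j / npsi ^+ 2 * psi th x) / psi th x.
Proof. by move=> px; rewrite pd_ln_norm //; field; rewrite px nrm_psi_neq0. Qed.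

Lemma local_energy_response j x : psi th x != 0 ->
  derivable (fun t => Hop (psi t) x) th (e j) ->
  Hop (dpsi j) x = pd j (fun t => Hop (psi t) x) th ->
  pd j (fun t => local_energy Hop psi t x) th
    + local_energy Hop psi th x * (pd j (fun t => ln `|psi t x|) th - cpsi j / npsi ^+ 2)
  = (Hop (dpsi j) x - cpsi j / npsi ^+ 2 * Hop (psi th) x) / psi th x.
Proof.
move=> px /derivableP DH HopE; have Dpsi := derivableP (psi_derivable j x).
rewrite pd_ln_norm // /local_energy /pd in HopE *.
have [_ ->] := is_derive_div DH Dpsi px.
by rewrite -HopE; field; rewrite px nrm_psi_neq0.
Qed.

Hypothesis psi_ae_neq0 : {ae mu, forall x, psi th x != 0}.
Hypothesis measurable_score :
  forall j, measurable_fun setT (fun x => pd j (fun t => ln `|psi t x|) th).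

Lemma born_mean_score j :
  born_mean mu (psi th) (fun x => pd j (fun t => ln `|psi t x|) th) = cpsi j / npsi ^+ 2.
Proof.
have L2psi := linear_operator_L2 Hlin dom_psi.
have L2dpsi := linear_operator_L2 Hlin (dom_dpsi j).
rewrite /born_mean /ip -RintegralZr //; last exact: L2_integrableM.
apply: ae_eq_Rintegral.
- apply: measurable_funM (measurable_score j) _.
  apply: measurable_funM _ (measurable_cst _).
  by apply: measurable_funX.
- exact: measurable_funM (measurable_funM measurable_psi (measurable_dpsi j)) (measurable_cst _).
- apply: filterS psi_ae_neq0 => x px; rewrite pd_ln_norm //.
  by field; rewrite px nrm_psi_neq0.
Qed.

Hypothesis Hop_derivable :
  forall j, {ae mu, forall x, derivable (fun t => Hop (psi t) x) th (e j)}.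
Hypothesis Hop_pd :
  forall j, {ae mu, forall x, Hop (dpsi j) x = pd j (fun t => Hop (psi t) x) th}.
Hypothesis measurable_pd_local_energy :
  forall j, measurable_fun setT (fun x => pd j (fun t => local_energy Hop psi t x) th).

Lemma born_mean_local_energy i j :
  born_mean mu (psi th)
    (fun x =>
       (pd j (fun t => local_energy Hop psi t x) th
        + local_energy Hop psi th x
          * (pd j (fun t => ln `|psi t x|) th
             - born_mean mu (psi th) (fun y => pd j (fun t => ln `|psi t y|) th)))
       * (pd i (fun t => ln `|psi t x|) th
          - born_mean mu (psi th) (fun y => pd i (fun t => ln `|psi t y|) th)))
  = Rintegral mu setT (covariance_integrand i j).
Proof.
have mE : measurable_fun setT (local_energy Hop psi th).
  exact: measurable_funM (linear_operator_measurable Hlin dom_psi)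
                         (measurable_funV measurable_psi).
have mpsi2 : measurable_fun setT (fun x => psi th x ^+ 2) by apply: measurable_funX.
rewrite !born_mean_score /born_mean.
apply: ae_eq_Rintegral => //.
- apply: measurable_funM _ (measurable_funM mpsi2 (measurable_cst _)).
  apply: measurable_funM _ (measurable_funB (measurable_score i) (measurable_cst _)).
  apply: measurable_funD (measurable_pd_local_energy j) _.
  exact: measurable_funM mE (measurable_funB (measurable_score j) (measurable_cst _)).
- apply: filterS3 psi_ae_neq0 (Hop_derivable j) (Hop_pd j) => x px dH HopE.
  rewrite local_energy_response // centered_score // mulf_div -expr2 mulrA divfK //.
  exact: expf_neq0.
Qed.

End WavefunctionFamily.

Theorem mainTheorem1 (d : measure_display) (X : measurableType d) (R : realType)
  (mu : {measure set X -> \bar R}) (P : nat)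
  (dom : set (X -> R)) (Hop : (X -> R) -> (X -> R))
  (psi : 'rV[R]_P -> X -> R) :
  linear_operator mu dom Hop ->
  densely_defined mu dom ->
  self_adjoint mu dom Hop ->
  (forall th, dom (psi th)) ->
  (forall th, nrm mu (psi th) != 0) ->
  (forall th, {ae mu, forall x, psi th x != 0}) ->
  (forall th (j : 'I_P) x, derivable (fun t => psi t x) th (delta_mx 0 j)) ->
  (forall th (j : 'I_P), dom (fun x => pd j (fun t => psi t x) th)) ->
  (forall th (j : 'I_P),
     {ae mu, forall x, derivable (fun t => Hop (psi t) x) th (delta_mx 0 j)}) ->
  (forall th (j : 'I_P),
     {ae mu, forall x, Hop (fun y => pd j (fun t => psi t y) th) x
                       = pd j (fun t => Hop (psi t) x) th}) ->
  (forall th (j : 'I_P),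
     derivable (fun t => Rintegral mu setT (fun x => psi t x ^+ 2)) th (delta_mx 0 j) /\
     pd j (fun t => Rintegral mu setT (fun x => psi t x ^+ 2)) th
       = Rintegral mu setT (fun x => pd j (fun t => psi t x ^+ 2) th)) ->
  (forall th (j : 'I_P),
     measurable_fun setT (fun x => pd j (fun t => ln `|psi t x|) th) /\
     measurable_fun setT (fun x => pd j (fun t => local_energy Hop psi t x) th)) ->
  forall (th : 'rV[R]_P) (i j : 'I_P),
    ip mu (fun x => pd i (fun t => psi t x / nrm mu (psi t)) th)
          (Hop (fun x => pd j (fun t => psi t x / nrm mu (psi t)) th))
    = born_mean mu (psi th)
        (fun x =>
           (pd j (fun t => local_energy Hop psi t x) th
            + local_energy Hop psi th x
              * (pd j (fun t => ln `|psi t x|) th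
                 - born_mean mu (psi th) (fun y => pd j (fun t => ln `|psi t y|) th)))
           * (pd i (fun t => ln `|psi t x|) th
              - born_mean mu (psi th) (fun y => pd i (fun t => ln `|psi t y|) th))).
Proof.
move=> Hlin _ _ dom_psi nrm_neq0 psi_ae_neq0 psi_der dom_dpsi Hop_der Hop_pd pd_sqnorm
  measurable_pd th i j.
rewrite (ip_pd_normalized Hlin (dom_psi th) (nrm_neq0 th) (psi_der th) (dom_dpsi th)
  (pd_sqnorm th)).
by rewrite (born_mean_local_energy Hlin (dom_psi th) (nrm_neq0 th) (psi_der th)
  (dom_dpsi th) (psi_ae_neq0 th) (fun j => (measurable_pd th j).1)
  (Hop_der th) (Hop_pd th) (fun j => (measurable_pd th j).2)).
Qed.
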